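(* For $i=1,\dots,k$, let $\mathcal{E}_i$ be Euclidean spaces and $h_i\colon \mathcal{E}_i\to\mathbb{R}^{m_i}$ be $C^\infty$ functions such that each $h_i$ satisfies assumptions (A1), (A2), (A3) (stated in the context) with constants $R_i$, $\underline{\sigma}_i$ and $C_{h_i}$ respectively. Let $\mathcal{E}=\mathcal{E}_1\times\cdots\times\mathcal{E}_k$, $m=m_1+\cdots+m_k$, and define $h\colon\mathcal{E}\to\mathbb{R}^m$ by $h(x_1,\dots,x_k)=(h_1(x_1),\dots,h_k(x_k))^\top$. Then $h$ satisfies (A1), (A2) and (A3) with constants $R=\min(R_1,\dots,R_k)$, $\underline{\sigma}=\min(\underline{\sigma}_1,\dots,\underline{\sigma}_k)$ and $C_h=\max(C_{h_1},\dots,C_{h_k})$.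
   Context: For a $C^\infty$ map $h\colon\mathcal{E}\to\mathbb{R}^m$ on a Euclidean space $\mathcal{E}$ (norm $\|\cdot\|$; on $\mathbb{R}^m$ the 2-norm), write $\mathrm{D}h(x)$ for its differential and $\sigma_{\min}(A)=\sigma_m(A)$ for the $m$-th (smallest) singular value of a linear map $A\colon\mathcal{E}\to\mathbb{R}^m$. (A1) with constants $R,\underline{\sigma}>0$: for all $x$ in $\mathcal{C}=\{x\in\mathcal{E}:\|h(x)\|\le R\}$ one has $\sigma_{\min}(\mathrm{D}h(x))\ge\underline{\sigma}$. (A2): the sets $\mathcal{M}=\{x\in\mathcal{E}:h(x)=0\}$ and $\mathcal{C}=\{x:\|h(x)\|\le R\}$ are compact. (A3) with constant $C_h>0$: for all $x\in\mathcal{C}$ and $v\in\mathcal{E}$, $h(x+v)=h(x)+\mathrm{D}h(x)[v]+E(x,v)$ with $\|E(x,v)\|\le C_h\|v\|^2$. *)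

From HB Require Import structures.
From mathcomp Require Import all_boot all_order all_algebra.
From mathcomp Require Import all_classical all_reals all_analysis.
Set Implicit Arguments. Unset Strict Implicit. Unset Printing Implicit Defensive.
Import Order.TTheory GRing.Theory Num.Theory.
Import numFieldNormedType.Exports.
Local Open Scope classical_set_scope.
Local Open Scope ring_scope.

Section Defs.
Variable R : realType.

(* A Euclidean space of dimension n is modelled as 'rV[R]_n with the
   Euclidean (2-)norm; R^m likewise. *)
Definition enorm n (x : 'rV[R]_n) : R := Num.sqrt (\sum_(j < n) x ord0 j ^+ 2).

(* Matrix (for the action v |-> v *m A on row vectors) of the differential. *)
Definition Dmx n m (h : 'rV[R]_n -> 'rV[R]_m) (x : 'rV[R]_n) : 'M[R]_(n, m) :=
  lin1_mx ('d h x).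

Fixpoint Ck (k : nat) (n p : nat) (f : 'rV[R]_n -> 'rV[R]_p) : Prop :=
  match k with
  | 0 => continuous f
  | k'.+1 => (forall x, differentiable f x) /\
             Ck k' (fun x => mxvec (lin1_mx ('d f x)))
  end.
Definition smooth n p (f : 'rV[R]_n -> 'rV[R]_p) := forall k, Ck k f.

(* sigma_min(A) = sigma_m(A) for a linear map A : E -> R^m, given by its
   matrix A : 'M_(n,m) (acting v |-> v *m A).  Its adjoint is y |-> y *m A^T,
   so A A^* has matrix A^T *m A; the singular values sigma_1..sigma_m are the
   square roots of the eigenvalues of A A^*, the m-th (smallest) being the
   square root of the least eigenvalue. *)
Definition sigma_min n m (A : 'M[R]_(n, m)) : R :=
  Num.sqrt (inf [set a : R | eigenvalue (A^T *m A) a]).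

Definition A1 n m (h : 'rV[R]_n -> 'rV[R]_m) (Rc sig : R) : Prop :=
  0 < Rc /\ 0 < sig /\
  forall x, enorm (h x) <= Rc -> sig <= sigma_min (Dmx h x).

Definition A2 n m (h : 'rV[R]_n -> 'rV[R]_m) (Rc : R) : Prop :=
  compact [set x | h x = 0] /\ compact [set x | enorm (h x) <= Rc].

Definition A3 n m (h : 'rV[R]_n -> 'rV[R]_m) (Rc Ch : R) : Prop :=
  0 < Ch /\
  forall x v, enorm (h x) <= Rc ->
    enorm (h (x + v) - h x - 'd h x v) <= Ch * enorm v ^+ 2.

(* min / max of finitely many reals indexed by 'I_k (k >= 1; value 0 if k = 0) *)
Definition bigminr k : ('I_k -> R) -> R :=
  match k with
  | 0 => fun _ => 0
  | k'.+1 => fun f => \big[Num.min/f ord0]_(i < k'.+1) f i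
  end.
Definition bigmaxr k : ('I_k -> R) -> R :=
  match k with
  | 0 => fun _ => 0
  | k'.+1 => fun f => \big[Num.max/f ord0]_(i < k'.+1) f i
  end.

(* The product map h(x_1,..,x_k) = (h_1(x_1),..,h_k(x_k)) on
   E = E_1 x .. x E_k = 'rV_(\sum n_i), with x_i = submxrow x i. *)
Definition hprod k (n m : 'I_k -> nat)
  (h : forall i, 'rV[R]_(n i) -> 'rV[R]_(m i))
  (x : 'rV[R]_(\sum_(i < k) n i)) : 'rV[R]_(\sum_(i < k) m i) :=
  mxrow (fun i => h i (submxrow x i)).

End Defs.

(* Everything is blockwise.  Writing x_i for the blocks of x, the product map
   is the block row of the h_i(x_i), so |h(x)|^2 = sum_i |h_i(x_i)|^2: each
   |h_i(x_i)| is at most |h(x)|, hence a point of C has all its blocks in the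
   C_i.  The remainder of h at x is the block row of the remainders of the h_i,
   and the norm of a block row is at most the sum of the norms of its blocks, so
   it is bounded by sum_i C |v_i|^2 = C |v|^2.  A quadratic remainder bound
   identifies the differential: Dh(x) is block diagonal with blocks Dh_i(x_i).
   Then Dh^T Dh is block diagonal with blocks Dh_i^T Dh_i, its eigenvalues are
   those of the blocks, and sigma_min(Dh(x)) >= min_i sigma_min(Dh_i(x_i)).
   Finally the zero set and the sublevel set of h are closed, since h is
   continuous, and bounded, since their blocks lie in the compact sets of the
   h_i. *)

From HB Require Import structures.
From mathcomp Require Import all_boot all_order all_algebra.
From mathcomp Require Import all_classical all_reals all_analysis.
Import Order.TTheory GRing.Theory Num.Theory.
Import numFieldNormedType.Exports.
Local Open Scope ring_scope.
Local Open Scope classical_set_scope.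
Set Implicit Arguments. Unset Strict Implicit. Unset Printing Implicit Defensive.

Section EuclideanNorm.
Variable R : realType.

Lemma enorm_ge0 n (x : 'rV[R]_n) : 0 <= enorm x.
Proof. exact: sqrtr_ge0. Qed.

Lemma enorm_sqr n (x : 'rV[R]_n) : enorm x ^+ 2 = \sum_(j < n) x ord0 j ^+ 2.
Proof. by rewrite sqr_sqrtr // sumr_ge0 // => j _; apply: sqr_ge0. Qed.

Lemma enorm_sqr_mx n (x : 'rV[R]_n) : enorm x ^+ 2 = (x *m x^T) ord0 ord0.
Proof. by rewrite enorm_sqr mxE; apply: eq_bigr => j _; rewrite mxE expr2. Qed.

Lemma enorm_eq0 n (x : 'rV[R]_n) : (enorm x == 0) = (x == 0).
Proof.
apply/idP/eqP => [|->]; last first.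
  by rewrite /enorm big1 ?sqrtr0 // => j _; rewrite mxE expr0n.
rewrite -sqrf_eq0 enorm_sqr => /eqP /psumr_eq0P x0.
apply/rowP => j; rewrite mxE; apply/eqP; rewrite -sqrf_eq0.
by apply/eqP/x0 => // i _; apply: sqr_ge0.
Qed.

Lemma normr_le_enorm n (x : 'rV[R]_n) : `|x| <= enorm x.
Proof.
rewrite -[`|x|]/(mx_norm x) mx_normrE; apply: bigmax_le => [|[i j] _ /=].
  exact: enorm_ge0.
rewrite (ord1 i) -sqrtr_sqr ler_sqrt -?enorm_sqr ?sqr_ge0 //.
by rewrite enorm_sqr (bigD1 j) //= lerDl sumr_ge0 // => l _; apply: sqr_ge0.
Qed.

Lemma enorm_sqr_le n (x : 'rV[R]_n) : enorm x ^+ 2 <= n%:R * `|x| ^+ 2.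
Proof.
rewrite enorm_sqr mulr_natl -[n in _ *+ n]card_ord -sumr_const.
apply: ler_sum => j _; rewrite -real_normK ?num_real // lerXn2r ?nnegrE //.
by rewrite -[`|x|]/(mx_norm x) mx_normrE; apply/bigmax_geP; right; exists (ord0, j).
Qed.

Lemma enorm_mxrow_sqr k (p : 'I_k -> nat) (u : forall i, 'rV[R]_(p i)) :
  enorm (\mxrow_i u i) ^+ 2 = \sum_i enorm (u i) ^+ 2.
Proof.
rewrite enorm_sqr_mx tr_mxrow mul_mxrow_mxcol summxE.
by apply: eq_bigr => i _; rewrite enorm_sqr_mx.
Qed.

Lemma enorm_submxrow_le k (p : 'I_k -> nat) (x : 'rV[R]_(\sum_i p i)) i :
  enorm (submxrow x i) <= enorm x.
Proof.
rewrite -ler_sqr ?nnegrE ?enorm_ge0 // -{2}[x]submxrowK enorm_mxrow_sqr.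
by rewrite [leRHS](bigD1 i) //= lerDl sumr_ge0 // => j _; apply: sqr_ge0.
Qed.

Lemma enorm_mxrow_le_sum k (p : 'I_k -> nat) (u : forall i, 'rV[R]_(p i)) :
  enorm (\mxrow_i u i) <= \sum_i enorm (u i).
Proof.
rewrite -ler_sqr ?nnegrE ?enorm_ge0 ?sumr_ge0 // => [|i _]; last exact: enorm_ge0.
rewrite enorm_mxrow_sqr [leRHS]expr2 mulr_suml; apply: ler_sum => i _.
rewrite expr2 ler_wpM2l ?enorm_ge0 // [leRHS](bigD1 i) //= lerDl.
by rewrite sumr_ge0 // => j _; apply: enorm_ge0.
Qed.

End EuclideanNorm.

Section BlockRows.
Variables (R : pzRingType) (k : nat) (p : 'I_k -> nat).

Lemma submxrowZ m (c : R) (A : 'M[R]_(m, \sum_i p i)) j :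
  submxrow (c *: A) j = c *: submxrow A j.
Proof. by apply/matrixP => r s; rewrite !mxE. Qed.

Lemma mxrowEsum m (Y : forall i, 'M[R]_(m, p i)) :
  \mxrow_i Y i = \sum_i Y i *m (submxrow 1%:M i)^T.
Proof.
rewrite -[LHS]mulmx1 -[X in _ *m X](submxcolK 1%:M) mul_mxrow_mxcol.
by apply: eq_bigr => i _; rewrite tr_submxrow trmx1.
Qed.

Lemma mul_submxrow1 m (A : 'M[R]_(m, \sum_i p i)) j :
  A *m submxrow 1%:M j = submxrow A j.
Proof. by rewrite mul_submxrow mulmx1. Qed.

End BlockRows.

Section RectangularBlockDiagonal.
Variables (R : pzRingType) (k : nat) (p q : 'I_k -> nat).

(* As in [\mxdiag], [conform_mx 0 (D i)] retypes [D i] as a block of type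
   'M_(p i, q j) when [i == j]. *)
Definition mxdiag_rect (D : forall i, 'M[R]_(p i, q i)) :
  'M[R]_(\sum_i p i, \sum_i q i) :=
  \mxblock_(i, j) if i == j then conform_mx 0 (D i) else 0.

Lemma mul_mxdiag_rect m (A : 'M[R]_(m, \sum_i p i))
    (D : forall i, 'M[R]_(p i, q i)) :
  A *m mxdiag_rect D = \mxrow_j (submxrow A j *m D j).
Proof.
rewrite /mxdiag_rect mxblockEh mul_mxrow; apply/eq_mxrow => j.
rewrite -{1}[A]submxrowK mul_mxrow_mxcol (bigD1 j) //= eqxx conform_mx_id.
by rewrite [X in _ + X]big1 ?addr0 // => i /negbTE ->; rewrite mulmx0.
Qed.

End RectangularBlockDiagonal.

Lemma tr_mxdiag_rect (R : pzRingType) k (p q : 'I_k -> nat)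
    (D : forall i, 'M[R]_(p i, q i)) :
  (mxdiag_rect D)^T = mxdiag_rect (fun i => (D i)^T).
Proof.
rewrite tr_mxblock; apply/eq_mxblock => i j; rewrite eq_sym.
by case: eqVneq => [->|]; rewrite ?trmx_conform ?trmx0.
Qed.

Section BlockDiagonalEigen.
Variables (F : fieldType) (k : nat).

Lemma trmx_mul_mxdiag_rect (p q : 'I_k -> nat) (D : forall i, 'M[F]_(p i, q i)) :
  (mxdiag_rect D)^T *m mxdiag_rect D = \mxdiag_i ((D i)^T *m D i).
Proof.
apply/eqP/mulmxP => w; rewrite mulmxA tr_mxdiag_rect !mul_mxdiag_rect.
by apply/eq_mxrow => j; rewrite mxrowK mulmxA.
Qed.

Lemma eigenvalue_mxdiag (p : 'I_k -> nat) (G : forall i, 'M[F]_(p i)) a :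
  eigenvalue (\mxdiag_i G i) a <-> exists i, eigenvalue (G i) a.
Proof.
have mulG (w : 'rV_(\sum_i p i)) :
    w *m \mxdiag_i G i = \mxrow_i (submxrow w i *m G i).
  by rewrite -{1}[w]submxrowK mul_mxrow_mxdiag.
split=> [/eigenvalueP [v vG v0] | [j /eigenvalueP [u uG u0]]].
  have /existsP [j vj0] : [exists j, submxrow v j != 0].
    apply: contraNT v0 => /existsPn v0; apply/eqP/mxrowP => j.
    by rewrite submxrow0; apply/eqP/negPn/v0.
  exists j; apply/eigenvalueP; exists (submxrow v j) => //.
  by rewrite -submxrowZ -vG mulG mxrowK.
apply/eigenvalueP; exists (\mxrow_i if j == i then conform_mx 0 u else 0).
  rewrite mulG; apply/mxrowP => i; rewrite submxrowZ !mxrowK.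
  by case: eqVneq => [<-|]; rewrite ?conform_mx_id ?mul0mx ?scaler0.
apply: contraNneq u0 => /(congr1 (fun w => submxrow w j)).
by rewrite mxrowK eqxx conform_mx_id submxrow0 => ->.
Qed.

End BlockDiagonalEigen.

Section SmallestSingularValue.
Variables (R : realType) (n m : nat).
Implicit Type A : 'M[R]_(n, m).

Lemma eigenvalue_trmx_mul_ge0 A a : eigenvalue (A^T *m A) a -> 0 <= a.
Proof.
case/eigenvalueP => v vAA v0.
have : a * enorm v ^+ 2 = enorm (v *m A^T) ^+ 2.
  rewrite !enorm_sqr_mx trmx_mul trmxK !mulmxA -[v *m _ *m _]mulmxA vAA.
  by rewrite -scalemxAl [RHS]mxE.
have v_gt0 : 0 < enorm v ^+ 2 by rewrite exprn_gt0 // lt0r enorm_eq0 v0 enorm_ge0.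
by move=> e; rewrite -(pmulr_lge0 _ v_gt0) e sqr_ge0.
Qed.

Lemma sigma_min_ge A s : 0 < s ->
  s <= sigma_min A <->
  (exists a, eigenvalue (A^T *m A) a) /\ forall a, eigenvalue (A^T *m A) a -> s ^+ 2 <= a.
Proof.
set E := [set a | eigenvalue (A^T *m A) a] => s0.
have E_lb : lbound E 0 by move=> a; apply: eigenvalue_trmx_mul_ge0.
split=> [s_le | [[a Ea] sE]].
  have [E0 | /set0P [a Ea]] := eqVneq E set0.
    by move: s_le; rewrite /sigma_min -/E E0 inf0 sqrtr0 leNgt s0.
  split=> [|b Eb]; first by exists a.
  have inf_ge0 : 0 <= inf E by apply: lb_le_inf E_lb; exists a.
  apply: le_trans (ge_inf (ex_intro _ 0 E_lb) Eb).
  by rewrite -(sqr_sqrtr inf_ge0) lerXn2r ?nnegrE ?(ltW s0).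
have E_ne : E !=set0 by exists a.
by rewrite /sigma_min -/E -(ger0_norm (ltW s0)) -sqrtr_sqr ler_sqrt ?(lb_le_inf E_ne).
Qed.

End SmallestSingularValue.

(* The block [i0] only witnesses [k > 0]: without blocks there are no
   eigenvalues and [sigma_min] is [sqrt (inf set0) = 0]. *)
Lemma sigma_min_mxdiag_rect (R : realType) k (p q : 'I_k -> nat)
    (D : forall i, 'M[R]_(p i, q i)) (i0 : 'I_k) s :
  0 < s -> (forall i, s <= sigma_min (D i)) -> s <= sigma_min (mxdiag_rect D).
Proof.
move=> s0 sD; have eigD i := (sigma_min_ge (D i) s0).1 (sD i).
apply/sigma_min_ge; rewrite // trmx_mul_mxdiag_rect; split.
  by have [[a Ea] _] := eigD i0; exists a; apply/eigenvalue_mxdiag; exists i0.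
by move=> a /eigenvalue_mxdiag [i]; apply: (eigD i).2.
Qed.

Section RowLinearMaps.
Variable R : realType.

Lemma normr_mulmx_le n p (v : 'rV[R]_n) (B : 'M[R]_(n, p)) :
  `|v *m B| <= n%:R * `|B| * `|v|.
Proof.
have coord_le q r (A : 'M[R]_(q, r)) i j : `|A i j| <= `|A|.
  by rewrite -[`|A|]/(mx_norm A) mx_normrE; apply/bigmax_geP; right; exists (i, j).
rewrite -[`|v *m B|]/(mx_norm (v *m B)) mx_normrE.
apply: bigmax_le => [|[i j] _ /=]; first by rewrite !mulr_ge0.
rewrite mxE (le_trans (ler_norm_sum _ _ _)) // -mulrA mulr_natl.
rewrite -[n in _ *+ n]card_ord -sumr_const; apply: ler_sum => l _.
by rewrite normrM mulrC ler_pM ?coord_le.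
Qed.

Lemma continuous_mulmx n p (B : 'M[R]_(n, p)) :
  continuous (fun v : 'rV[R]_n => v *m B).
Proof.
apply: (@bounded_linear_continuous _ _ _ (mulmxr B)).
apply/linear_boundedP; near=> r => v /=.
apply: le_trans (normr_mulmx_le v B) (ler_wpM2r (normr_ge0 v) _).
by near: r; apply: nbhs_pinfty_ge; rewrite num_real.
Unshelve. all: by end_near. Qed.

Lemma continuous_linear_rV n p (L : {linear 'rV[R]_n -> 'rV[R]_p}) : continuous L.
Proof.
have -> : L = (fun v => v *m lin1_mx L) :> (_ -> _).
  by apply: funext => v; rewrite mul_rV_lin1.
exact: continuous_mulmx.
Qed.

Lemma diff_quadratic_remainder n p (f : 'rV[R]_n -> 'rV[R]_p) x
    (L : {linear 'rV[R]_n -> 'rV[R]_p}) C :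
  (forall v, enorm (f (x + v) - f x - L v) <= C * enorm v ^+ 2) ->
  'd f x = L :> (_ -> _).
Proof.
move=> fL; apply: diff_unique; first exact: continuous_linear_rV.
apply/eqaddoP => e e0; set K := `|C| * n%:R.
have K1_gt0 : 0 < K + 1 by rewrite ltr_wpDl ?mulr_ge0.
near=> v.
have -> : (f \o shift x - (cst (f x) + L)) v = f (x + v) - f x - L v.
  by rewrite opprD addrA; congr (f _ - _ - _); apply: addrC.
apply: le_trans (normr_le_enorm _) (le_trans (fL v) _).
apply: (@le_trans _ _ (K * `|v| * `|v|)).
  rewrite -mulrA -expr2 /K -mulrA.
  apply: le_trans (ler_wpM2r (sqr_ge0 _) (real_ler_norm (num_real C))) _.
  exact/ler_wpM2l/enorm_sqr_le.
apply: ler_wpM2r => //; apply: (@le_trans _ _ (K * (e / (K + 1)))).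
  apply: ler_wpM2l; first by rewrite mulr_ge0.
  by near: v; apply: (@nbhs0_le _ 'rV[R]_n); rewrite divr_gt0.
by rewrite mulrCA ger_pMr // ler_pdivrMr // mul1r lerDl.
Unshelve. all: by end_near. Qed.

End RowLinearMaps.

Lemma continuous_sum (K : numFieldType) (T : topologicalType)
    (V : normedModType K) (I : Type) (r : seq I) (f : I -> T -> V) :
  (forall i, continuous (f i)) -> continuous (fun x => \sum_(i <- r) f i x).
Proof.
move=> fc; rewrite -fct_sumE.
apply: (big_ind (fun g : T -> V => continuous g)) => //; first exact: cst_continuous.
by move=> g1 g2 g1c g2c x; exact: continuousD (g1c x) (g2c x).
Qed.

Lemma continuous_enorm (R : realType) n : continuous (@enorm R n).
Proof.
move=> x.
apply: (@continuous_comp _ _ _ (fun y : 'rV[R]_n => \sum_j y ord0 j ^+ 2)).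
  apply: continuous_sum => j {}x.
  under eq_fun do rewrite expr2.
  by apply: continuousM; apply: coord_continuous.
exact: sqrt_continuous.
Qed.

Lemma continuous_submxrow (R : realType) k (p : 'I_k -> nat) i :
  continuous (fun x : 'rV[R]_(\sum_j p j) => submxrow x i).
Proof.
have -> : (fun x : 'rV[R]_(\sum_j p j) => submxrow x i) = mulmxr (submxrow 1%:M i).
  by apply: funext => x; rewrite /= mul_submxrow1.
exact: continuous_mulmx.
Qed.

Lemma compact_blocks (R : realType) k (p : 'I_k -> nat)
    (A : forall i, set 'rV[R]_(p i)) (S : set 'rV[R]_(\sum_i p i)) :
  (forall i, compact (A i)) -> closed S ->
  (forall x, S x -> forall i, A i (submxrow x i)) -> compact S.
Proof.
move=> A_compact S_closed SA; apply: bounded_closed_compact => //.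
have /choice [M AM] : forall i, exists M : R, forall y, A i y -> `|y| <= M.
  move=> i; have [M [_ AM]] := compact_bounded (A_compact i).
  by exists (M + 1); apply: AM; rewrite ltrDl.
pose P i := (submxrow (1%:M : 'M[R]_(\sum_j p j)) i)^T.
exists (\sum_i (p i)%:R * `|P i| * M i); split; first exact: num_real.
move=> r r_gt x Sx; apply/ltW/le_lt_trans/r_gt.
rewrite -[x]submxrowK mxrowEsum (le_trans (ler_norm_sum _ _ _)) //.
apply: ler_sum => i _; apply: le_trans (normr_mulmx_le _ _) _.
by apply: ler_wpM2l; [rewrite mulr_ge0 | apply/AM/SA].
Qed.

Section ProductMap.
Variables (R : realType) (k : nat) (n m : 'I_k -> nat).
Variable h : forall i, 'rV[R]_(n i) -> 'rV[R]_(m i).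
Arguments h : clear implicits.
Implicit Types x v : 'rV[R]_(\sum_i n i).

Lemma submxrow_hprod x i : submxrow (hprod h x) i = h i (submxrow x i).
Proof. exact: mxrowK. Qed.

Lemma enorm_hprod_ge x i : enorm (h i (submxrow x i)) <= enorm (hprod h x).
Proof. by rewrite -submxrow_hprod enorm_submxrow_le. Qed.

Lemma continuous_hprod : (forall i, continuous (h i)) -> continuous (hprod h).
Proof.
move=> hc; pose P i := (submxrow (1%:M : 'M[R]_(\sum_j m j)) i)^T.
have -> : hprod h = fun x => \sum_i h i (submxrow x i) *m P i.
  by apply: funext => x; rewrite /hprod mxrowEsum.
apply: continuous_sum => i x.
apply: (@continuous_comp _ _ _ (fun y => h i (submxrow y i)) (mulmxr (P i))).
  apply: (@continuous_comp _ _ _ (fun y => submxrow y i) (h i)).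
    exact: continuous_submxrow.
  exact: hc.
exact: continuous_mulmx.
Qed.

Lemma closed_hprod_sublevel r : (forall i, continuous (h i)) ->
  closed [set x | enorm (hprod h x) <= r].
Proof.
move=> hc; apply: (@preimage_closed _ _ _ [set s | s <= r]); last exact: closed_le.
move=> x _; apply: (@continuous_comp _ _ _ (hprod h) (@enorm R _)).
  exact: continuous_hprod.
exact: continuous_enorm.
Qed.

Lemma compact_hprod_zeros : (forall i, continuous (h i)) ->
  (forall i, compact [set y | h i y = 0]) -> compact [set x | hprod h x = 0].
Proof.
move=> hc hK; apply: (@compact_blocks _ _ _ (fun i => [set y | h i y = 0])) => //.
  have -> : [set x | hprod h x = 0] = [set x | enorm (hprod h x) <= 0].
    apply/funext => x; apply/propext.
    by rewrite /= le_eqVlt ltNge enorm_ge0 orbF enorm_eq0; split=> /eqP.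
  exact: closed_hprod_sublevel.
by move=> x /= hx0 i; rewrite -submxrow_hprod hx0 submxrow0.
Qed.

Lemma compact_hprod_sublevel r (rs : 'I_k -> R) : (forall i, continuous (h i)) ->
  (forall i, compact [set y | enorm (h i y) <= rs i]) -> (forall i, r <= rs i) ->
  compact [set x | enorm (hprod h x) <= r].
Proof.
move=> hc hK r_le.
apply: (@compact_blocks _ _ _ (fun i => [set y | enorm (h i y) <= rs i])) => //.
  exact: closed_hprod_sublevel.
by move=> x /= xr i; apply: le_trans (enorm_hprod_ge x i) (le_trans xr (r_le i)).
Qed.

Definition Dhprod x := mxdiag_rect (fun i => Dmx (h i) (submxrow x i)).

Lemma hprod_remainder x v :
  hprod h (x + v) - hprod h x - v *m Dhprod x =
  \mxrow_i (h i (submxrow x i + submxrow v i) - h i (submxrow x i)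
            - 'd (h i) (submxrow x i) (submxrow v i)).
Proof.
rewrite /hprod mul_mxdiag_rect -!mxrowB; apply: eq_mxrow => i.
by rewrite submxrowD /Dmx mul_rV_lin1.
Qed.

Section QuadraticRemainder.
Variables (x : 'rV[R]_(\sum_i n i)) (C : R).
Hypothesis h_rem : forall i (v : 'rV[R]_(n i)),
  enorm (h i (submxrow x i + v) - h i (submxrow x i) - 'd (h i) (submxrow x i) v)
    <= C * enorm v ^+ 2.

Lemma enorm_hprod_remainder_le v :
  enorm (hprod h (x + v) - hprod h x - v *m Dhprod x) <= C * enorm v ^+ 2.
Proof.
rewrite hprod_remainder; apply: le_trans (enorm_mxrow_le_sum _) _.
have -> : enorm v ^+ 2 = \sum_i enorm (submxrow v i) ^+ 2.
  by rewrite -enorm_mxrow_sqr submxrowK.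
by rewrite mulr_sumr; apply: ler_sum => i _; apply: h_rem.
Qed.

Lemma diff_hprod : 'd (hprod h) x = mulmxr (Dhprod x) :> (_ -> _).
Proof.
exact: (@diff_quadratic_remainder _ _ _ _ _ (mulmxr (Dhprod x)) _ enorm_hprod_remainder_le).
Qed.

Lemma Dmx_hprod : Dmx (hprod h) x = Dhprod x.
Proof. by apply/eqP/mulmxP => u; rewrite /Dmx mul_rV_lin1 diff_hprod. Qed.

Lemma enorm_hprod_diff_remainder_le v :
  enorm (hprod h (x + v) - hprod h x - 'd (hprod h) x v) <= C * enorm v ^+ 2.
Proof. by rewrite diff_hprod; apply: enorm_hprod_remainder_le. Qed.

End QuadraticRemainder.
End ProductMap.

Lemma bigminr_le (R : realType) k (f : 'I_k -> R) i : bigminr f <= f i.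
Proof. by case: k f i => [f [] //|k f i]; apply: bigmin_le. Qed.

Lemma le_bigmaxr (R : realType) k (f : 'I_k -> R) i : f i <= bigmaxr f.
Proof. by case: k f i => [f [] //|k f i]; apply: le_bigmax. Qed.

Lemma bigminr_gt0 (R : realType) k (f : 'I_k -> R) :
  (0 < k)%N -> (forall i, 0 < f i) -> 0 < bigminr f.
Proof.
case: k f => [//|k] f _ f_gt0; apply: (big_ind (fun r => 0 < r)) => // a b a0 b0.
by rewrite lt_min a0 b0.
Qed.

Theorem mainTheorem1 (R : realType) (k : nat) (n m : 'I_k -> nat)
  (h : forall i, 'rV[R]_(n i) -> 'rV[R]_(m i))
  (Rs sigs Chs : 'I_k -> R) :
  (0 < k)%N ->
  (forall i, smooth (h i)) ->
  (forall i, A1 (h i) (Rs i) (sigs i)) ->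
  (forall i, A2 (h i) (Rs i)) ->
  (forall i, A3 (h i) (Rs i) (Chs i)) ->
  A1 (hprod h) (bigminr Rs) (bigminr sigs) /\
  A2 (hprod h) (bigminr Rs) /\
  A3 (hprod h) (bigminr Rs) (bigmaxr Chs).
Proof.
move=> k_gt0 h_smooth h_A1 h_A2 h_A3; pose i0 := Ordinal k_gt0.
have h_cont i : continuous (h i) := h_smooth i 0%N.
have in_C x : enorm (hprod h x) <= bigminr Rs ->
    forall i, enorm (h i (submxrow x i)) <= Rs i.
  by move=> xC i; apply: le_trans (enorm_hprod_ge h x i) (le_trans xC (bigminr_le Rs i)).
have h_rem x : enorm (hprod h x) <= bigminr Rs -> forall i v,
    enorm (h i (submxrow x i + v) - h i (submxrow x i) - 'd (h i) (submxrow x i) v)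
      <= bigmaxr Chs * enorm v ^+ 2.
  move=> xC i v; apply: le_trans ((h_A3 i).2 _ v (in_C x xC i)) _.
  by rewrite ler_wpM2r ?sqr_ge0 ?le_bigmaxr.
have sigs_gt0 : 0 < bigminr sigs by apply: bigminr_gt0 => // i; case: (h_A1 i) => _ [].
split; [|split].
- split; [|split] => //; first by apply: bigminr_gt0 => // i; case: (h_A1 i).
  move=> x xC; rewrite (Dmx_hprod (h_rem x xC)) /Dhprod.
  apply: (sigma_min_mxdiag_rect i0) => // i.
  exact: le_trans (bigminr_le _ i) ((h_A1 i).2.2 _ (in_C x xC i)).
- split; first exact: compact_hprod_zeros h_cont (fun i => (h_A2 i).1).
  exact: compact_hprod_sublevel h_cont (fun i => (h_A2 i).2) (bigminr_le Rs).
- split; first by apply: lt_le_trans (le_bigmaxr Chs i0); case: (h_A3 i0).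
  by move=> x v xC; apply: enorm_hprod_diff_remainder_le (h_rem x xC) v.
Qed.
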